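(* Let $K/\mathbb{Q}$ be a finite extension with ring of integers $A$, let $f:A\to\mathbb{N}$ be any function, let $t$ be a positive integer, and let $H(f,t)=\sum_{k\in A}\big(k^{f(k)}(k^t-1)\big)$ be the sum of the principal ideals generated by the elements $k^{f(k)}(k^t-1)$. Then $\ker pr_t\subseteq H(f,t)$; in particular $H(f,t)$ is $t$-congruing.
   Context: For a maximal ideal $\mathfrak p$ of $A$, $H^{\mathfrak p}_t$ is the ideal of the completion $\hat A_{\mathfrak p}$ generated by all $x^t-1$ with $x\in\hat A_{\mathfrak p}^\times$; $pr_t:A\to\prod_{\mathfrak p}\hat A_{\mathfrak p}/H^{\mathfrak p}_t$ (over all maximal ideals) has $\mathfrak p$-component completion followed by reduction mod $H^{\mathfrak p}_t$. An ideal $I$ is $t$-congruing if for every $a\in A$ there is $N\in\mathbb{N}$ with $a^N(a^t-1)\in I$. *)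

From HB Require Import structures.
From mathcomp Require Import all_boot all_order all_algebra all_field.
Set Implicit Arguments. Unset Strict Implicit. Unset Printing Implicit Defensive.
Import GRing.Theory.
Local Open Scope ring_scope.

(* x lies in the ring of integers A of K: x is a root of a monic integer polynomial. *)
Definition integralZ (K : fieldExtType rat) (x : K) : Prop :=
  exists p : {poly int}, p \is monic /\ root (map_poly (fun z : int => z%:~R) p) x.

(* Ideals of A, represented as predicates on K contained in A. *)
Definition is_ideal (K : fieldExtType rat) (I : K -> Prop) : Prop :=
  [/\ (forall x, I x -> integralZ x), I 0,
      (forall x y, I x -> I y -> I (x + y)) &
      (forall a x, integralZ a -> I x -> I (a * x))].

Definition maximal_ideal (K : fieldExtType rat) (P : K -> Prop) : Prop :=
  [/\ is_ideal P, ~ P 1 &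
      forall J : K -> Prop, is_ideal J -> (forall x, P x -> J x) ->
        (forall x, J x -> P x) \/ J 1].

Fixpoint ideal_pow (K : fieldExtType rat) (P : K -> Prop) (n : nat) : K -> Prop :=
  match n with
  | 0 => fun x => integralZ x
  | n.+1 => fun x => exists m (a b : 'I_m -> K),
              (forall i, P (a i) /\ ideal_pow P n (b i)) /\
              x = \sum_(i < m) a i * b i
  end.

(* Elements of the completion \hat A_P = lim A/P^n, given by compatible
   sequences of representatives: s n in A and s (n+1) = s n mod P^n.
   Two such sequences define the same element iff s n = s' n mod P^n for all n. *)
Definition compl_seq (K : fieldExtType rat) (P : K -> Prop) (s : nat -> K) : Prop :=
  (forall n, integralZ (s n)) /\ (forall n, ideal_pow P n (s n.+1 - s n)).

(* The image of a in \hat A_P lies in H^P_t, the ideal of \hat A_P generated by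
   all x^t - 1 with x a unit of \hat A_P (y is the inverse of x). *)
Definition in_HPt (K : fieldExtType rat) (P : K -> Prop) (t : nat) (a : K) : Prop :=
  exists m (c x y : 'I_m -> nat -> K),
    (forall i, [/\ compl_seq P (c i), compl_seq P (x i), compl_seq P (y i) &
                   forall n, ideal_pow P n (x i n * y i n - 1)]) /\
    (forall n, ideal_pow P n (a - \sum_(i < m) c i n * (x i n ^+ t - 1))).

(* a lies in ker pr_t : every P-component of pr_t a vanishes. *)
Definition ker_pr (K : fieldExtType rat) (t : nat) (a : K) : Prop :=
  integralZ a /\ forall P : K -> Prop, maximal_ideal P -> in_HPt P t a.

Definition Hft (K : fieldExtType rat) (f : K -> nat) (t : nat) (x : K) : Prop :=
  exists m (c k : 'I_m -> K),
    (forall i, integralZ (c i) /\ integralZ (k i)) /\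
    x = \sum_(i < m) c i * (k i ^+ f (k i) * (k i ^+ t - 1)).

Definition t_congruing (K : fieldExtType rat) (t : nat) (I : K -> Prop) : Prop :=
  forall a, integralZ a -> exists N : nat, I (a ^+ N * (a ^+ t - 1)).

From HB Require Import structures.
From mathcomp Require Import all_boot all_order all_algebra all_field.
From mathcomp Require Import ring.
From Stdlib Require Import Classical.
Set Implicit Arguments. Unset Strict Implicit. Unset Printing Implicit Defensive.
Import GRing.Theory Num.Theory.
Local Open Scope ring_scope.

(* Suppose [a] lies in [ker pr_t] but not in [H = H(f,t)], and let [T = (H : a)]: a
   proper ideal containing the nonzero integer [2^(f 2) (2^t - 1)].  Then [T + pA] is
   proper for some prime [p], hence lies in a maximal ideal [J]; its existence, like the
   rest of the argument, rests on [A] having rank [n = dim K] over [Z].  As [a] lies in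
   [H^J_t], it is congruent to an element of [H] modulo every power of [J].  For
   [N = n f(p)], some [s] outside [J] multiplies [J^N] into [p^(f p) A], while
   [p^(f p) (p^t - 1)] lies in [H] and [p^t - 1] lies outside [J].  So [s' a] lies in [H]
   for some [s'] outside [J], i.e. [s'] lies in [T], which is contained in [J]: a
   contradiction.  The t-congruing part is immediate from the generators of [H]. *)

Section IntegralZ.
Variable K : fieldExtType rat.
Implicit Types x y : K.

Lemma integralZE x : integralZ x <-> integralOver intr x.
Proof. by split=> [[p [mp rp]]|[p mp rp]]; exists p. Qed.

Lemma integralZ_add x y : integralZ x -> integralZ y -> integralZ (x + y).
Proof. by move=> /integralZE hx /integralZE hy; apply/integralZE/integral_add. Qed.

Lemma integralZ_mul x y : integralZ x -> integralZ y -> integralZ (x * y).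
Proof. by move=> /integralZE hx /integralZE hy; apply/integralZE/integral_mul. Qed.

Lemma integralZ_opp x : integralZ x -> integralZ (- x).
Proof. by move=> /integralZE hx; apply/integralZE/integral_opp. Qed.

Lemma integralZ_sub x y : integralZ x -> integralZ y -> integralZ (x - y).
Proof. by move=> hx hy; apply/integralZ_add/integralZ_opp. Qed.

Lemma integralZ_int (z : int) : integralZ (z%:~R : K).
Proof. exact/integralZE/integral_id. Qed.

Lemma integralZ_nat n : integralZ (n%:R : K).
Proof. exact/integralZE/integral_nat. Qed.

Lemma integralZ0 : integralZ (0 : K).
Proof. exact: integralZ_nat 0. Qed.

Lemma integralZ1 : integralZ (1 : K).
Proof. exact: integralZ_nat 1. Qed.

Lemma integralZ_sum (I : Type) (r : seq I) (P : pred I) (F : I -> K) :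
  (forall i, P i -> integralZ (F i)) -> integralZ (\sum_(i <- r | P i) F i).
Proof. by move=> h; elim/big_ind: _ => //; [exact: integralZ0 | exact: integralZ_add]. Qed.

Lemma integralZ_prod (I : Type) (r : seq I) (P : pred I) (F : I -> K) :
  (forall i, P i -> integralZ (F i)) -> integralZ (\prod_(i <- r | P i) F i).
Proof. by move=> h; elim/big_ind: _ => //; [exact: integralZ1 | exact: integralZ_mul]. Qed.

Lemma integralZ_exp x n : integralZ x -> integralZ (x ^+ n).
Proof. by move=> hx; rewrite -(card_ord n) -prodr_const; apply: integralZ_prod. Qed.

Lemma integralZ_ideal : is_ideal (@integralZ K).
Proof. by split=> //; [exact: integralZ0 | exact: integralZ_add | exact: integralZ_mul]. Qed.

End IntegralZ.

Section Ideal.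
Variables (K : fieldExtType rat) (I : K -> Prop).
Hypothesis idI : is_ideal I.

Lemma ideal_integralZ x : I x -> integralZ x.
Proof. by case: idI => h _ _ _; apply: h. Qed.

Lemma ideal0 : I 0.
Proof. by case: idI. Qed.

Lemma ideal_add x y : I x -> I y -> I (x + y).
Proof. by case: idI => _ _ h _; apply: h. Qed.

Lemma ideal_mull a x : integralZ a -> I x -> I (a * x).
Proof. by case: idI => _ _ _ h; apply: h. Qed.

Lemma ideal_mulr a x : integralZ a -> I x -> I (x * a).
Proof. by rewrite mulrC; apply: ideal_mull. Qed.

Lemma ideal_opp x : I x -> I (- x).
Proof. by rewrite -mulN1r; apply/ideal_mull/integralZ_opp/integralZ1. Qed.

Lemma ideal_sub x y : I x -> I y -> I (x - y).
Proof. by move=> hx hy; apply/ideal_add/ideal_opp. Qed.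

Lemma ideal_sum (J : Type) (r : seq J) (P : pred J) (F : J -> K) :
  (forall i, P i -> I (F i)) -> I (\sum_(i <- r | P i) F i).
Proof. by move=> h; elim/big_ind: _ => //; [exact: ideal0 | exact: ideal_add]. Qed.

Lemma int_notin_ideal (p : nat) (c : int) : ~ I 1 -> I p%:R -> prime p ->
  ~~ (p %| `|c|)%N -> ~ I c%:~R.
Proof.
move=> I1 Ip pp pNc Ic; have [u [w e]] := Bezoutz p%:Z c.
have g1 : gcdz p%:Z c = 1.
  by rewrite /gcdz absz_nat; congr Posz; apply/eqP; rewrite -/(coprime p `|c|) prime_coprime.
have e1 : (1 : K) = u%:~R * p%:R + w%:~R * c%:~R.
  by rewrite -[p%:R]/((p%:Z)%:~R) -!intrM -intrD e g1.
by apply: I1; rewrite e1; apply: ideal_add; apply: ideal_mull => //; apply: integralZ_int.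
Qed.

End Ideal.

Section FamilySums.
Variable K : fieldExtType rat.
Variables (R : K -> K -> Prop) (F : K -> K -> K).

(* Both [ideal_pow P n.+1] and [Hft f t] unfold to this shape. *)
Definition sum_family (x : K) : Prop :=
  exists m (a b : 'I_m -> K), (forall i, R (a i) (b i)) /\ x = \sum_(i < m) F (a i) (b i).

Lemma sum_family0 : sum_family 0.
Proof.
by rewrite /sum_family; exists 0%N, (fun _ => 0), (fun _ => 0); rewrite big_ord0; split=> [[]|].
Qed.

Lemma sum_family1 a b : R a b -> sum_family (F a b).
Proof. by rewrite /sum_family; exists 1%N, (fun _ => a), (fun _ => b); rewrite big_ord1. Qed.

Definition ord_cat (m1 m2 : nat) (u : 'I_m1 -> K) (v : 'I_m2 -> K) (i : 'I_(m1 + m2)) :=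
  match split i with inl j => u j | inr j => v j end.

Lemma sum_familyD x y : sum_family x -> sum_family y -> sum_family (x + y).
Proof.
move=> [m1 [a1 [b1 [R1 ->]]]] [m2 [a2 [b2 [R2 ->]]]].
rewrite /sum_family; exists (m1 + m2)%N, (ord_cat a1 a2), (ord_cat b1 b2); split.
  by move=> i; rewrite /ord_cat; case: split.
by rewrite big_split_ord /ord_cat; congr (_ + _); apply: eq_bigr => i _;
  rewrite -?[lshift _ _]/(unsplit (inl _)) -?[rshift _ _]/(unsplit (inr _)) unsplitK.
Qed.

Lemma sum_familyMl c x : (forall a b, R a b -> R (c * a) b) ->
  (forall a b, F (c * a) b = c * F a b) -> sum_family x -> sum_family (c * x).
Proof.
move=> Rc Fc [m [a [b [Rab ->]]]]; rewrite /sum_family.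
exists m, (fun i => c * a i), b; split=> [i|]; first exact: Rc.
by rewrite big_distrr; apply: eq_bigr => i _; rewrite Fc.
Qed.

Lemma sum_family_ind (S : K -> Prop) : S 0 -> (forall x y, S x -> S y -> S (x + y)) ->
  (forall a b, R a b -> S (F a b)) -> forall x, sum_family x -> S x.
Proof. by move=> S0 SD SF x [m [a [b [Rab ->]]]]; elim/big_ind: _ => // i _; apply: SF. Qed.

Lemma sum_family_ideal : (forall a b, R a b -> integralZ (F a b)) ->
  (forall c a b, integralZ c -> R a b -> R (c * a) b) ->
  (forall c a b, F (c * a) b = c * F a b) -> is_ideal sum_family.
Proof.
move=> RA Rc Fc; split.
- by apply: sum_family_ind; [exact: integralZ0 | exact: integralZ_add | exact: RA].
- exact: sum_family0.
- exact: sum_familyD.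
- by move=> c x hc; apply: sum_familyMl => // a b; apply: Rc.
Qed.

End FamilySums.

Section IdealPow.
Variables (K : fieldExtType rat) (P : K -> Prop).
Hypothesis idP : is_ideal P.

Lemma ideal_powS n x : ideal_pow P n.+1 x <->
  sum_family (fun a b => P a /\ ideal_pow P n b) *%R x.
Proof. by []. Qed.

Lemma ideal_pow_ideal n : is_ideal (ideal_pow P n).
Proof.
elim: n => [|n IH]; first exact: integralZ_ideal.
apply: (@sum_family_ideal _ (fun a b => P a /\ ideal_pow P n b) *%R)
  => [a b [Pa Pb]|c a b hc [Pa Pb]|c a b]; last by rewrite -mulrA.
- by apply: integralZ_mul; [apply: ideal_integralZ Pa | apply: ideal_integralZ Pb].
- by split=> //; apply: ideal_mull.
Qed.

Lemma ideal_pow_ind (k : nat) (S : K -> Prop) : S 0 ->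
  (forall x y, S x -> S y -> S (x + y)) ->
  (forall c x, integralZ c -> S x -> S (c * x)) ->
  (forall y : nat -> K, (forall i, P (y i)) -> S (\prod_(0 <= i < k) y i)) ->
  forall x, ideal_pow P k x -> S x.
Proof.
elim: k S => [|k IH] S S0 SD SM Sprod x.
  move=> hx; have := SM x _ hx (Sprod (fun _ => 0) (fun _ => ideal0 idP)).
  by rewrite big_geq // mulr1.
move/ideal_powS; move: x; apply: sum_family_ind => // a b [Pa Pb].
apply: (IH (fun z => S (a * z))) => //; first by rewrite mulr0.
- by move=> u v Su Sv; rewrite mulrDr; apply: SD.
- by move=> c u hc Su; rewrite mulrCA; apply: SM.
- move=> y Py; have := Sprod (fun i => if i is i'.+1 then y i' else a).
  rewrite big_ltn // big_add1 /=; apply; case=> //.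
Qed.

End IdealPow.

Section Hft.
Variables (K : fieldExtType rat) (f : K -> nat) (t : nat).
Local Notation Hft_gens := (fun c k : K => integralZ c /\ integralZ k).
Local Notation Hft_term := (fun c k : K => c * (k ^+ f k * (k ^+ t - 1))).

Lemma Hft_ideal : is_ideal (Hft f t).
Proof.
apply: (@sum_family_ideal _ Hft_gens Hft_term)
  => [c k [hc hk]|c c' k hc [hc' hk]|c c' k]; last by rewrite -mulrA.
- apply/integralZ_mul/integralZ_mul/integralZ_sub/integralZ1 => //; exact: integralZ_exp.
- by split=> //; apply: integralZ_mul.
Qed.

Lemma Hft_gen k : integralZ k -> Hft f t (k ^+ f k * (k ^+ t - 1)).
Proof.
by move=> hk; have := @sum_family1 _ Hft_gens Hft_term 1 k (conj (integralZ1 K) hk); rewrite mul1r.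
Qed.

End Hft.

Section Colon.
Variables (K : fieldExtType rat) (I : K -> Prop).
Hypothesis idI : is_ideal I.

Definition colon_ideal (a r : K) := integralZ r /\ I (r * a).

Lemma colon_ideal_ideal a : is_ideal (colon_ideal a).
Proof.
split=> [r []//||r s [hr Ir] [hs Is]|c r hc [hr Ir]].
- by split; [exact: integralZ0 | rewrite mul0r; exact: ideal0].
- by split; [exact: integralZ_add | rewrite mulrDl; exact: ideal_add].
- by split; [exact: integralZ_mul | rewrite -mulrA; exact: ideal_mull].
Qed.

Definition ideal_addM (q z : K) := exists u w, I u /\ integralZ w /\ z = u + q * w.

Lemma ideal_addM_ideal q : integralZ q -> is_ideal (ideal_addM q).
Proof.
move=> hq; split.
- move=> z [u [w [Iu [hw ->]]]].
  by apply/integralZ_add/integralZ_mul => //; apply: ideal_integralZ Iu.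
- by exists 0, 0; rewrite mulr0 addr0; split; [exact: ideal0 | split; first exact: integralZ0].
- move=> _ _ [u1 [w1 [I1 [hw1 ->]]]] [u2 [w2 [I2 [hw2 ->]]]].
  exists (u1 + u2), (w1 + w2); split; first exact: ideal_add.
  by split; [exact: integralZ_add | rewrite mulrDr addrACA].
- move=> c _ hc [u [w [Iu [hw ->]]]]; exists (c * u), (c * w); split; first exact: ideal_mull.
  by split; [exact: integralZ_mul | rewrite mulrDr mulrCA].
Qed.

Lemma ideal_addM_l q z : I z -> ideal_addM q z.
Proof. by exists z, 0; rewrite mulr0 addr0; split=> //; split=> //; exact: integralZ0. Qed.

Lemma ideal_addM_r q z : integralZ z -> ideal_addM q (q * z).
Proof. by exists 0, z; rewrite add0r; split; first exact: ideal0. Qed.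

End Colon.

Lemma maximal_ideal_prime (K : fieldExtType rat) (P : K -> Prop) : maximal_ideal P ->
  forall x y, integralZ x -> integralZ y -> P (x * y) -> P x \/ P y.
Proof.
move=> [idP P1 Pmax] x y hx hy Pxy; case: (classic (P x)) => Px; [by left | right].
have [PJ|] := Pmax _ (ideal_addM_ideal idP hx) (ideal_addM_l x).
  by exfalso; apply/Px/PJ; have := ideal_addM_r idP x (integralZ1 K); rewrite mulr1.
move=> [u [b [Pu [hb e]]]].
have -> : y = u * y + b * (x * y) by rewrite mulrA [b * x]mulrC -mulrDl -e mul1r.
by apply: (ideal_add idP); [exact: ideal_mulr | exact: ideal_mull].
Qed.

Lemma exists_prime_addM (K : fieldExtType rat) (T : K -> Prop) (m : nat) :
  is_ideal T -> ~ T 1 -> (0 < m)%N -> T m%:R -> exists2 p, prime p & ~ ideal_addM T p%:R 1.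
Proof.
move=> idT T1; elim/ltn_ind: m => m IH m_gt0 Tm.
have m_gt1 : (1 < m)%N.
  rewrite ltn_neqAle m_gt0 andbT; apply/eqP => m1.
  by move: Tm; rewrite -m1 mulr1n.
have pp := pdiv_prime m_gt1; set p := pdiv m in pp *.
case: (classic (ideal_addM T p%:R 1)) => [[u [w [Tu [hw e]]]]|]; last by exists p.
have p_gt1 := prime_gt1 pp; have pm : (p %| m)%N := pdiv_dvd m.
apply: (IH (m %/ p)%N); first exact: ltn_Pdiv.
  by rewrite divn_gt0 ?prime_gt0 //; apply: dvdn_leq.
have -> : ((m %/ p)%:R : K) = (m %/ p)%:R * (u + p%:R * w) by rewrite -e mulr1.
rewrite mulrDr mulrA -natrM (divnK pm).
by apply: (ideal_add idT); [exact/(ideal_mull idT)/Tu/integralZ_nat | exact: ideal_mulr].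
Qed.

Section Dependence.
Variable K : fieldExtType rat.
Local Notation dimK := (\dim {:K}).

Lemma natrK_eq0 (n : nat) : ((n%:R : K) == 0) = (n == 0%N).
Proof. by rewrite -(rmorph_nat (in_alg K)) fmorph_eq0 pnatr_eq0. Qed.

Lemma rat_dependent (m : nat) (v : nat -> K) : (dimK < m)%N ->
  exists k : 'I_m -> rat, \sum_(i < m) k i *: v i = 0 /\ exists i, k i != 0.
Proof.
move=> hm; pose X := [tuple v i | i < m].
have /negP nfX : ~~ free X.
  apply/negP=> /eqP hX; move: (dimvS (subvf <<X>>%VS)).
  by rewrite hX size_tuple leqNgt hm.
apply: NNPP => hk0; apply/nfX/freeP => k hk i; apply: NNPP => /eqP ki; apply: hk0.
exists k; split; last by exists i.
by rewrite -[RHS]hk; apply: eq_bigr => j _; rewrite (nth_mktuple (fun i => v i)).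
Qed.

Lemma int_dependent (m : nat) (v : nat -> K) : (dimK < m)%N ->
  exists2 c : nat -> int, \sum_(i < m) (c i)%:~R * v i = 0 & exists2 i, (i < m)%N & c i != 0.
Proof.
move=> hm; have [k [hk [i0 ki0]]] := rat_dependent v hm.
pose D : int := \prod_(j < m) denq (k j).
pose c (i : 'I_m) : int := numq (k i) * \prod_(j < m | j != i) denq (k j).
have cE i : (c i)%:~R = k i * D%:~R :> rat.
  by rewrite /c /D [in RHS](bigD1 i) //= !intrM numqE -mulrA.
have D0 : D != 0 by apply/prodf_neq0 => j _; exact: denq_neq0.
exists (fun n => if insub n is Some i then c i else 0); last first.
  by exists i0 => //; rewrite valK -(intr_eq0 rat) cE mulf_neq0 ?intr_eq0.
transitivity (\sum_(i < m) (D%:~R : rat) *: (k i *: v i)).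
  by apply: eq_bigr => i _; rewrite valK scalerA [_ * k i]mulrC -cE scaler_int mulrzl.
by rewrite -scaler_sumr hk scaler0.
Qed.

(* Dividing a relation by the gcd of its coefficients makes one of them prime to [p]. *)
Lemma int_dependent_mod (p m : nat) (v : nat -> K) : prime p -> (dimK < m)%N ->
  exists2 c : nat -> int, \sum_(i < m) (c i)%:~R * v i = 0 &
    exists2 i, (i < m)%N & ~~ (p %| `|c i|)%N.
Proof.
move=> pp hm; have [c0 rel0 [i0 hi0 ci0]] := int_dependent v hm.
pose g := (\big[gcdn/0]_(i < m) `|c0 i|)%N.
have g_dvd (i : 'I_m) : (g %| `|c0 i|)%N by apply: (biggcdn_inf i).
have c0E (i : 'I_m) : c0 i = (c0 i %/ g%:Z)%Z * g%:Z by rewrite divzK // dvdzE.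
have g0 : (g%:R : K) != 0.
  rewrite natrK_eq0; apply: contraNneq ci0 => g0.
  by have := g_dvd (Ordinal hi0); rewrite g0 dvd0n absz_eq0.
exists (fun i => (c0 i %/ g%:Z)%Z).
  apply: (mulIf g0); rewrite mul0r -[RHS]rel0 mulr_suml; apply: eq_bigr => i _.
  by rewrite [in RHS]c0E intrM mulrAC.
have g_gt0 : (0 < g)%N by rewrite lt0n -natrK_eq0.
apply: NNPP => hNp.
have : (p * g %| 1 * g)%N.
  rewrite mul1n; apply/dvdn_biggcdP => i _.
  rewrite c0E abszM absz_nat dvdn_pmul2r //.
  by apply: contra_notT hNp => hi; exists i.
by rewrite dvdn_pmul2r // dvdn1 => /eqP p1; rewrite p1 in pp.
Qed.

End Dependence.

Section MaximalOver.
Variables (K : fieldExtType rat) (p : nat).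
Hypothesis pp : prime p.

Definition p_independent d (u : nat -> K) := forall c : nat -> int,
  (exists2 w, integralZ w & \sum_(i < d) (c i)%:~R * u i = p%:R * w) ->
  forall i, (i < d)%N -> (p %| `|c i|)%N.

Lemma p_independent_bound d u : (forall i, (i < d)%N -> integralZ (u i)) ->
  p_independent d u -> (d <= \dim {:K})%N.
Proof.
move=> hu ind; rewrite leqNgt; apply/negP => hd.
have [c rel [i hi /negP]] := int_dependent_mod u pp hd; apply; apply: ind hi.
by exists 0; [exact: integralZ0 | rewrite mulr0].
Qed.

(* If [c_d x] lies in [J] but [x] does not, then [p | c_d], since the ideal
   [(J : x)] would otherwise contain the coprime integers [p] and [c_d]. *)
Lemma p_independent_rcons (J : K -> Prop) d u x :
  is_ideal J -> J p%:R -> (forall i, (i < d)%N -> J (u i)) -> p_independent d u ->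
  ~ J x -> integralZ x -> p_independent d.+1 (fun i => if i == d then x else u i).
Proof.
move=> idJ Jp Ju ind Jx hx c [w hw]; rewrite big_ord_recr /= eqxx.
rewrite (eq_bigr (fun i : 'I_d => (c i)%:~R * u i)) => [rel|i _]; last by rewrite ltn_eqF.
have Jcx : J ((c d)%:~R * x).
  rewrite -(addKr (\sum_(i < d) (c i)%:~R * u i) (_ * x)) rel.
  apply: ideal_add (ideal_opp _ _) _ => //; last exact: ideal_mulr.
  by apply: (ideal_sum idJ) => i _; apply: (ideal_mull idJ); [exact: integralZ_int | exact: Ju].
have pc : (p %| `|c d|)%N.
  apply: contraT => pNc; exfalso.
  apply: (int_notin_ideal (colon_ideal_ideal idJ x) _ _ pp pNc).
  - by case=> _; rewrite mul1r.
  - by split; [exact: integralZ_nat | exact: ideal_mulr].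
  - by split; [exact: integralZ_int | exact: Jcx].
pose c' := (c d %/ p%:Z)%Z; have cE : c d = c' * p%:Z by rewrite divzK // dvdzE.
move=> i; rewrite ltnS leq_eqVlt => /orP [/eqP -> //|hi].
apply: ind hi; exists (w - c'%:~R * x); first exact/integralZ_sub/integralZ_mul/hx/integralZ_int.
by rewrite mulrBr -rel cE intrM -[p%:R]/((p%:Z)%:~R) mulrAC [_ * p%:~R]mulrC addrK.
Qed.

(* Strictly increasing chains of proper ideals over [J0] carry growing
   p-independent families, whose length is bounded by [\dim {:K}]. *)
Lemma exists_maximal_over (J0 : K -> Prop) : is_ideal J0 -> ~ J0 1 -> J0 p%:R ->
  exists J, maximal_ideal J /\ forall z, J0 z -> J z.
Proof.
move=> idJ0 J01 J0p; apply: NNPP => nomax.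
suff chain d : exists J u, [/\ is_ideal J, ~ J 1, forall z, J0 z -> J z,
                             forall i, (i < d)%N -> J (u i) & p_independent d u].
  have [J [u [idJ _ _ Ju ind]]] := chain (\dim {:K}).+1.
  have := p_independent_bound (fun i hi => ideal_integralZ idJ (Ju i hi)) ind.
  by rewrite ltnn.
elim: d => [|d [J [u [idJ J1 J0J Ju ind]]]].
  by exists J0, (fun _ => 0); split=> // c _ i.
have [J' [x [idJ' JJ' J'1 J'x Jx]]] :
    exists J' x, [/\ is_ideal J', forall z, J z -> J' z, ~ J' 1, J' x & ~ J x].
  apply: NNPP => h; apply: nomax; exists J; split=> //; split=> // J' idJ' JJ'.
  case: (classic (J' 1)) => [|J'1]; [by right | left].
  by move=> x J'x; apply: NNPP => Jx; apply: h; exists J', x.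
exists J', (fun i => if i == d then x else u i); split=> //.
- by move=> z /J0J /JJ'.
- move=> i; case: eqP => [_ _ //|/eqP ne].
  by rewrite ltnS leq_eqVlt (negbTE ne) => /Ju /JJ'.
- exact: p_independent_rcons idJ (J0J _ J0p) Ju ind Jx (ideal_integralZ idJ' J'x).
Qed.

End MaximalOver.

Lemma exists_least (P : pred nat) (m : nat) : (exists2 i, (i < m)%N & P i) ->
  exists j, [/\ (j < m)%N, P j & forall k, (k < j)%N -> ~~ P k].
Proof.
case=> i im Pi; have ex : exists k, (k < m)%N && P k by exists i; rewrite im.
case: (ex_minnP ex) => j /andP [jm Pj] jmin; exists j; split=> // k kj.
have km := ltn_trans kj jm; rewrite ltnNge in kj.
by apply: contraNN kj => Pk; apply: jmin; rewrite km Pk.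
Qed.

Section LocalAtPrime.
Variables (K : fieldExtType rat) (J : K -> Prop) (p : nat).
Hypotheses (idJ : is_ideal J) (J1 : ~ J 1) (Jp : J p%:R) (pp : prime p).
Local Notation dimK := (\dim {:K}).

(* The partial products [v_k = x_0 ... x_(k-1)], [k <= dimK], satisfy an integral
   relation with a coefficient prime to [p]; let [c_j] be the first one.  Then
   [s = sum_(k >= j) c_k x_j ... x_(k-1)] is [c_j] modulo [J], and [v_j s] is a
   multiple of [p]. *)
Lemma exists_mul_prod_dim (x : nat -> K) : (forall i, J (x i)) ->
  exists s, [/\ integralZ s, ~ J s &
    exists2 w, integralZ w & s * \prod_(0 <= i < dimK) x i = p%:R * w].
Proof.
move=> Jx; have hx i : integralZ (x i) := ideal_integralZ idJ (Jx i).
pose v k := \prod_(0 <= i < k) x i; pose z j k := \prod_(j <= i < k) x i.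
have hz j k : integralZ (z j k) by apply: integralZ_prod.
have [c rel /exists_least [j [jn pNcj pc]]] :=
  int_dependent_mod v pp (ltnSn dimK).
have vE k : (j <= k)%N -> v k = v j * z j k by move=> jk; rewrite -big_cat_nat.
pose s := \sum_(j <= k < dimK.+1) (c k)%:~R * z j k.
pose w := - \sum_(0 <= k < j) ((c k %/ p%:Z)%Z)%:~R * v k.
have vjs : v j * s = p%:R * w.
  have lowE : \sum_(0 <= k < j) (c k)%:~R * v k = - (p%:R * w).
    rewrite mulrN opprK big_distrr; apply: eq_big_nat => k /andP [_ kj].
    rewrite /= mulrA -[p%:R]/((p%:Z)%:~R) -intrM [(p%:Z * _)%R]mulrC.
    by rewrite divzK // dvdzE absz_nat; exact/negbNE/pc.
  have relE : \sum_(0 <= k < j) (c k)%:~R * v k + v j * s = 0.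
    rewrite -[RHS]rel -(big_mkord xpredT (fun k => (c k)%:~R * v k)).
    rewrite (big_cat_nat (leq0n j) (ltnW jn)) /= /s big_distrr; congr (_ + _).
    by apply: eq_big_nat => k /andP [jk _]; rewrite /= (vE k) // mulrCA.
  by move/eqP: relE; rewrite lowE addrC subr_eq0 => /eqP.
exists s; split.
- by apply: integralZ_sum => k _; apply/integralZ_mul/hz/integralZ_int.
- move=> Js; apply: (int_notin_ideal idJ J1 Jp pp pNcj).
  have -> : (c j)%:~R = s - \sum_(j.+1 <= k < dimK.+1) (c k)%:~R * z j k.
    by rewrite /s big_ltn // /z big_geq // mulr1 addrK.
  apply: (ideal_sub idJ) => //; rewrite big_nat_cond.
  apply: (ideal_sum idJ) => k /andP [/andP [jk _] _]; rewrite /z big_ltn // mulrA.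
  apply: (ideal_mulr idJ); first exact: integralZ_prod.
  by apply: (ideal_mull idJ); [exact: integralZ_int | exact: Jx].
- exists (w * z j dimK).
    apply/integralZ_mul/hz/integralZ_opp/integralZ_sum => k _.
    by apply: integralZ_mul; [exact: integralZ_int | exact: integralZ_prod].
  have jdim : (j <= dimK)%N by rewrite -ltnS.
  by rewrite -/(v dimK) (vE _ jdim) mulrA [s * _]mulrC vjs mulrA.
Qed.

End LocalAtPrime.

Section Approximation.
Variables (K : fieldExtType rat) (f : K -> nat) (t : nat) (P : K -> Prop).
Hypothesis idP : is_ideal P.

(* If [x y = 1] modulo [P^n], then [c (x^t - 1) = c y^e x^e (x^t - 1)] modulo [P^n],
   with [e = f x]; the right-hand side lies in [Hft f t]. *)
Lemma in_HPt_approx a : in_HPt P t a ->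
  forall n, exists2 h, Hft f t h & ideal_pow P n (a - h).
Proof.
move=> [m [c [x [y [hcxy rel]]]]] n; have idPn := ideal_pow_ideal idP n.
have hc i : integralZ (c i n) by case: (hcxy i) => [[? _] _ _ _].
have hx i : integralZ (x i n) by case: (hcxy i) => [_ [? _] _ _].
have hy i : integralZ (y i n) by case: (hcxy i) => [_ _ [? _] _].
have hxy i : ideal_pow P n (x i n * y i n - 1) by case: (hcxy i).
pose e i := f (x i n); pose g i := x i n ^+ t - 1.
exists (\sum_(i < m) (c i n * y i n ^+ e i) * (x i n ^+ f (x i n) * g i)).
  exists m, (fun i => c i n * y i n ^+ e i), (fun i => x i n); split=> // i.
  by split=> //; apply/integralZ_mul/integralZ_exp.
have -> : a - \sum_(i < m) (c i n * y i n ^+ e i) * (x i n ^+ f (x i n) * g i) =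
    (a - \sum_(i < m) c i n * g i) +
    \sum_(i < m) (c i n * g i) * (1 - (x i n * y i n) ^+ e i).
  rewrite -addrA; congr (_ + _); rewrite -!sumrN -big_split /=; apply: eq_bigr => i _.
  by rewrite /e exprMn; ring.
apply: (ideal_add idPn) => //; apply: (ideal_sum idPn) => i _.
apply: (ideal_mull idPn); first exact/integralZ_mul/integralZ_sub/integralZ1/integralZ_exp.
rewrite -opprB subrX1 -mulNr; apply: (ideal_mulr idPn); last exact: (ideal_opp idPn).
by apply: integralZ_sum => j _; apply/integralZ_exp/integralZ_mul.
Qed.

End Approximation.

Section LocalHft.
Variables (K : fieldExtType rat) (J : K -> Prop) (p : nat).
Hypotheses (idJ : is_ideal J) (J1 : ~ J 1) (Jp : J p%:R) (pp : prime p).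
Hypothesis Jprime : forall x y, integralZ x -> integralZ y -> J (x * y) -> J x \/ J y.
Local Notation dimK := (\dim {:K}).

Lemma prime_notin_mul x y : integralZ x -> integralZ y -> ~ J x -> ~ J y -> ~ J (x * y).
Proof. by move=> hx hy Jx Jy /(Jprime hx hy) []. Qed.

Lemma exists_mul_prod_dimX e (x : nat -> K) : (forall i, J (x i)) ->
  exists s, [/\ integralZ s, ~ J s &
    exists2 w, integralZ w & s * \prod_(0 <= i < dimK * e) x i = p%:R ^+ e * w].
Proof.
move=> Jx; elim: e => [|e [s1 [hs1 Js1 [w1 hw1 e1]]]].
  exists 1; split; [exact: integralZ1 | by [] | exists 1; first exact: integralZ1].
  by rewrite muln0 big_geq // expr0.
have [s2 [hs2 Js2 [w2 hw2 e2]]] := exists_mul_prod_dim idJ J1 Jp pp (fun i => Jx (i + dimK * e)%N).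
exists (s1 * s2); split; [exact: integralZ_mul | exact: prime_notin_mul |].
exists (w1 * w2); first exact: integralZ_mul.
rewrite mulnSr (big_cat_nat (leq0n (dimK * e))) ?leq_addr //= -{2}[(dimK * e)%N]add0n.
by rewrite big_addn addKn mulrACA e1 e2 exprS mulrACA [p%:R ^+ e * _]mulrC.
Qed.

Variables (f : K -> nat) (t : nat).
Hypothesis t_gt0 : (0 < t)%N.

(* [z] lies in the localisation of [Hft f t] at [J]. *)
Definition Hft_local (z : K) := exists s, [/\ integralZ s, ~ J s & Hft f t (s * z)].

Lemma Hft_local0 : Hft_local 0.
Proof.
by exists 1; split; [exact: integralZ1 | | rewrite mulr0; exact: ideal0 (Hft_ideal f t)].
Qed.

Lemma Hft_localD x y : Hft_local x -> Hft_local y -> Hft_local (x + y).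
Proof.
move=> [s1 [hs1 Js1 H1]] [s2 [hs2 Js2 H2]]; exists (s1 * s2).
split; [exact: integralZ_mul | exact: prime_notin_mul |].
rewrite mulrDr -!mulrA [s1 * (s2 * x)]mulrCA.
by apply: (ideal_add (Hft_ideal f t)); apply: (ideal_mull (Hft_ideal f t)).
Qed.

Lemma Hft_localMl c x : integralZ c -> Hft_local x -> Hft_local (c * x).
Proof.
move=> hc [s [hs Js Hx]]; exists s; split=> //.
by rewrite mulrCA; apply: (ideal_mull (Hft_ideal f t)).
Qed.

(* [p^(f p) (p^t - 1)] is a generator of [Hft f t], and [p^t - 1] is not in [J] since [p] is. *)
Lemma Hft_local_prod (x : nat -> K) : (forall i, J (x i)) ->
  Hft_local (\prod_(0 <= i < dimK * f p%:R) x i).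
Proof.
move=> Jx; have [s [hs Js [w hw sx]]] := exists_mul_prod_dimX (f p%:R) Jx.
have hp : integralZ (p%:R : K) := integralZ_nat K p.
have hpt : integralZ ((p%:R : K) ^+ t - 1) by apply/integralZ_sub/integralZ1/integralZ_exp.
exists ((p%:R ^+ t - 1) * s); split; first exact: integralZ_mul.
  apply: prime_notin_mul => // Jpt; apply: J1.
  rewrite -[1](subKr (p%:R ^+ t)); apply: (ideal_sub idJ _ Jpt).
  rewrite -(prednK t_gt0) exprS; apply: (ideal_mulr idJ) => //; exact: integralZ_exp.
rewrite -mulrA sx [_ ^+ f _ * w]mulrC mulrCA [(_ - 1) * _]mulrC.
by apply: (ideal_mull (Hft_ideal f t) hw); apply: Hft_gen.
Qed.

Lemma Hft_local_pow z : ideal_pow J (dimK * f p%:R) z -> Hft_local z.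
Proof.
apply: (ideal_pow_ind idJ); [exact: Hft_local0 | exact: Hft_localD | exact: Hft_localMl |].
exact: Hft_local_prod.
Qed.

Lemma in_HPt_Hft_local a : in_HPt J t a -> Hft_local a.
Proof.
move=> /(in_HPt_approx f idJ)/(_ (dimK * f p%:R)%N) [h Hh /Hft_local_pow].
move=> [s [hs Js Hs]]; exists s; split=> //; rewrite -(subrK h a) mulrDr.
by apply: (ideal_add (Hft_ideal f t)) => //; apply: (ideal_mull (Hft_ideal f t)).
Qed.

End LocalHft.

Theorem mainTheorem13 (K : fieldExtType rat) (f : K -> nat) (t : nat) :
  (0 < t)%N ->
  (forall a : K, ker_pr t a -> Hft f t a) /\ t_congruing t (Hft f t).
Proof.
move=> t_gt0; split=> [a [ha ker_a]|a ha]; last by exists (f a); exact: Hft_gen.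
apply: NNPP => Ha; pose T := colon_ideal (Hft f t) a.
have idT : is_ideal T := colon_ideal_ideal (Hft_ideal f t) a.
have T1 : ~ T 1 by case=> _; rewrite mul1r.
pose M := (2 ^ f 2%:R * (2 ^ t - 1))%N.
have M_gt0 : (0 < M)%N by rewrite muln_gt0 expn_gt0 /= subn_gt0 -{1}(expn0 2) ltn_exp2l.
have TM : T M%:R.
  split; first exact: integralZ_nat.
  rewrite natrM natrB ?expn_gt0 // !natrX mulrC.
  by apply: (ideal_mull (Hft_ideal f t)); [exact: ha | exact/Hft_gen/integralZ_nat].
have [p pp Tp] := exists_prime_addM idT T1 M_gt0 TM.
have Tp_p : ideal_addM T p%:R p%:R.
  by have := ideal_addM_r idT p%:R (integralZ1 K); rewrite mulr1.
have [J [maxJ TJ]] :=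
  exists_maximal_over pp (ideal_addM_ideal idT (integralZ_nat K p)) Tp Tp_p.
have [idJ J1 _] := maxJ.
have [s [hs Js Hsa]] := in_HPt_Hft_local idJ J1 (TJ _ Tp_p) pp (maximal_ideal_prime maxJ)
  f t_gt0 (ker_a J maxJ).
by apply/Js/TJ/ideal_addM_l.
Qed.
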